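(* Let $p>1$, $p'=\frac{p}{p-1}$, $\Omega=\{x\in\mathbb{R}^2\;;\;|x|>1\}$, and let $\eta,\eta^*,\psi_R,\psi_R^*,P(R)$ be as in the context. Then there exist positive constants $C_1,C_2,C_3,C_4$ (independent of $R$ and of $(x,t)$) such that for every $R>0$: (i) $\psi_R(x,t)=1$ if $(x,t)\in P(R/2)$, and $\psi_R(x,t)=0$ if $(x,t)\notin P(R)$; (ii) $|\partial_t\psi_R(x,t)|\le C_1R^{-1}[\psi_R^*(x,t)]^{1/p}$ for all $(x,t)\in P(R)$; (iii) $|\partial_t^2\psi_R(x,t)|\le C_2R^{-2}[\psi_R^*(x,t)]^{1/p}$ for all $(x,t)\in P(R)$; (iv) $|\nabla\psi_R(x,t)|\le C_3R^{-1}|x|(\log|x|)[\psi_R^*(x,t)]^{1/p}$ for all $(x,t)\in P(R)$; (v) $|\Delta\psi_R(x,t)|\le C_4R^{-1}[\psi_R^*(x,t)]^{1/p}$ for all $(x,t)\in P(R)$.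
   Context: Fix $\eta\in C^2([0,\infty))$ with $\eta=1$ on $[0,1/2]$, $\eta$ decreasing on $(1/2,1)$, $\eta=0$ on $[1,\infty)$; let $\eta^*(s)=0$ for $s\in[0,1/2)$ and $\eta^*(s)=\eta(s)$ for $s\ge1/2$. For $R>0$ set $s_R(x,t)=\frac{(|x|-1)^2+t}{R}$, $\psi_R(x,t)=[\eta(s_R(x,t))]^{2p'}$, $\psi_R^*(x,t)=[\eta^*(s_R(x,t))]^{2p'}$ for $(x,t)\in\Omega\times[0,\infty)$, and $P(R)=\{(x,t)\in\Omega\times[0,\infty)\;;\;(|x|-1)^2+t\le R\}$. *)

From Stdlib Require Import Reals.
From Coquelicot Require Import Coquelicot.
Open Scope R_scope.

(* Real power a^b for a >= 0 (with 0^b = 0, as appropriate for b > 0). *)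
Definition rpow (a b : R) : R := if Rlt_dec 0 a then Rpower a b else 0.

Definition pconj (p : R) : R := p / (p - 1).

Definition normx (x1 x2 : R) : R := sqrt (x1 ^ 2 + x2 ^ 2).

Definition inOmega (x1 x2 : R) : Prop := 1 < normx x1 x2.

Definition sR (R0 x1 x2 t : R) : R := ((normx x1 x2 - 1) ^ 2 + t) / R0.

Definition eta_star (eta : R -> R) (s : R) : R :=
  if Rlt_dec s (1/2) then 0 else eta s.

Definition psi (p : R) (eta : R -> R) (R0 x1 x2 t : R) : R :=
  rpow (eta (sR R0 x1 x2 t)) (2 * pconj p).
Definition psi_star (p : R) (eta : R -> R) (R0 x1 x2 t : R) : R :=
  rpow (eta_star eta (sR R0 x1 x2 t)) (2 * pconj p).

Definition inP (R0 x1 x2 t : R) : Prop :=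
  inOmega x1 x2 /\ 0 <= t /\ (normx x1 x2 - 1) ^ 2 + t <= R0.

Definition d_t (f : R -> R -> R -> R) (x1 x2 t : R) : R :=
  Derive (fun s => f x1 x2 s) t.
Definition d_x1 (f : R -> R -> R -> R) (x1 x2 t : R) : R :=
  Derive (fun y => f y x2 t) x1.
Definition d_x2 (f : R -> R -> R -> R) (x1 x2 t : R) : R :=
  Derive (fun y => f x1 y t) x2.
Definition d_tt (f : R -> R -> R -> R) (x1 x2 t : R) : R := d_t (d_t f) x1 x2 t.
Definition grad_norm (f : R -> R -> R -> R) (x1 x2 t : R) : R :=
  sqrt (d_x1 f x1 x2 t ^ 2 + d_x2 f x1 x2 t ^ 2).
Definition laplacian (f : R -> R -> R -> R) (x1 x2 t : R) : R :=
  d_x1 (d_x1 f) x1 x2 t + d_x2 (d_x2 f) x1 x2 t.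

(* eta in C^2([0,oo)): we require C^2 on (0,oo); since eta = 1 on [0,1/2]
   this is equivalent to C^2 on [0,oo) (one-sided at 0). *)
Definition C2_pos (eta : R -> R) : Prop :=
  forall s, 0 < s ->
    ex_derive eta s /\ ex_derive (Derive eta) s /\
    continuity_pt (Derive (Derive eta)) s.

Definition cutoff (eta : R -> R) : Prop :=
  C2_pos eta /\
  (forall s, 0 <= s <= 1/2 -> eta s = 1) /\
  (forall a b, 1/2 < a -> a < b -> b < 1 -> eta b <= eta a) /\
  (forall s, 1 <= s -> eta s = 0).

From Stdlib Require Import Reals Lra.
From Coquelicot Require Import Coquelicot.
Open Scope R_scope.

(* Write q = 2p' > 2, so that psi_R = G(s_R) with G = eta^q.  By the chain rule the
   derivatives of psi_R are combinations of G'(s_R) and G''(s_R) with coefficients built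
   from the explicit derivatives of s_R: d_t s_R = 1/R, |grad s_R| = 2(|x| - 1)/R and
   Laplacian s_R = 2(2 - 1/|x|)/R.  Both G' and G'' vanish on (0, 1/2) and on [1/2, 1]
   equal eta^(q-2) times a continuous, hence bounded, function; as q/p = q - 2,
   eta^(q-2) = (psi*_R)^(1/p) there.  On P(R) one has (|x| - 1)^2 <= R, and
   |x| - 1 <= |x| log |x| gives the weight in (iv). *)

Lemma locally_gt_of_continuous (f : R -> R) y c :
  continuous f y -> c < f y -> locally y (fun z => c < f z).
Proof. intros Hf Hc; exact (Hf _ (open_gt c (f y) Hc)). Qed.

Lemma Derive_locally_const f c a b s :
  (forall z, a < z < b -> f z = c) -> a < s < b -> Derive f s = 0.
Proof.
  intros Hf Hs; rewrite (Derive_ext_loc f (fun _ => c)); [apply Derive_const|].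
  apply (filter_imp (fun z => a < z /\ z < b)); [intros z Hz; now apply Hf|].
  apply filter_and; [exact (open_gt a s (proj1 Hs)) | exact (open_lt b s (proj2 Hs))].
Qed.

Lemma continuous_bounded f a b :
  a <= b -> (forall c, a <= c <= b -> continuous f c) ->
  exists M, forall c, a <= c <= b -> Rabs (f c) <= M.
Proof.
  intros Hab Hf.
  destruct (continuity_ab_maj (fun c => Rabs (f c)) a b Hab) as [c0 [Hc0 _]].
  - intros c Hc; apply continuity_pt_filterlim.
    apply (continuous_comp f Rabs); [now apply Hf | apply continuous_Rabs].
  - now exists (Rabs (f c0)).
Qed.

Lemma Derive2_comp (F F1 F2 u du ddu : R -> R) y :
  locally y (fun z => is_derive F (u z) (F1 (u z)) /\ is_derive u z (du z)) ->
  is_derive F1 (u y) (F2 (u y)) -> is_derive du y (ddu y) ->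
  Derive (fun z => F (u z)) y = F1 (u y) * du y /\
  Derive (fun z => Derive (fun w => F (u w)) z) y
    = F2 (u y) * du y ^ 2 + F1 (u y) * ddu y.
Proof.
  intros Hloc HF1 Hdu.
  assert (HD : forall z, is_derive F (u z) (F1 (u z)) /\ is_derive u z (du z) ->
                 Derive (fun z => F (u z)) z = F1 (u z) * du z).
  { intros z [HFz Huz]; apply is_derive_unique.
    replace (F1 (u z) * du z) with (scal (du z) (F1 (u z)))
      by (unfold scal; simpl; unfold mult; simpl; ring).
    exact (is_derive_comp F u z _ _ HFz Huz). }
  split; [now apply HD, (locally_singleton _ _ Hloc)|].
  rewrite (Derive_ext_loc _ (fun z => F1 (u z) * du z)) by exact (filter_imp _ _ HD Hloc).
  apply is_derive_unique.
  replace (F2 (u y) * du y ^ 2 + F1 (u y) * ddu y) with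
    (plus (mult (scal (du y) (F2 (u y))) (du y)) (mult (F1 (u y)) (ddu y)))
    by (unfold plus, mult, scal; simpl; unfold plus, mult; simpl; ring).
  apply (is_derive_mult (fun z => F1 (u z))); [| exact Hdu | intros; apply Rmult_comm].
  exact (is_derive_comp F1 u y _ _ HF1 (proj2 (locally_singleton _ _ Hloc))).
Qed.

Lemma is_derive_mult_vanishing (g : R -> R) :
  continuous g 0 -> g 0 = 0 -> is_derive (fun x => x * g x) 0 0.
Proof.
  intros Hg Hg0; apply is_derive_Reals; intros eps Heps.
  destruct (proj1 (continuity_pt_locally g 0) (proj2 (continuity_pt_filterlim g 0) Hg)
              (mkposreal eps Heps)) as [delta Hdelta].
  exists delta; intros h Hh0 Hh.
  replace (((0 + h) * g (0 + h) - 0 * g 0) / h - 0) with (g h - g 0)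
    by (rewrite Hg0, Rplus_0_l; field; exact Hh0).
  apply Hdelta; change (Rabs (h - 0) < delta); now rewrite Rminus_0_r.
Qed.

Lemma sub_1_le_mul_ln r : 0 < r -> r - 1 <= r * ln r.
Proof.
  intros Hr; pose proof (exp_ineq1_le (- ln r)) as E.
  rewrite exp_Ropp, exp_ln in E by exact Hr.
  apply (Rmult_le_compat_l r) in E; [|lra].
  rewrite Rinv_r in E by lra; lra.
Qed.

Lemma Rabs_mult_le a A c C : Rabs a <= A -> 0 <= c <= C -> Rabs (a * c) <= A * C.
Proof.
  intros Ha Hc; rewrite Rabs_mult, (Rabs_pos_eq c) by lra.
  apply Rmult_le_compat; [apply Rabs_pos | lra | easy | lra].
Qed.

Lemma rpow_ge0 a b : 0 <= rpow a b.
Proof. unfold rpow; destruct (Rlt_dec 0 a); [left; apply exp_pos | lra]. Qed.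

Lemma rpow_nonpos a b : a <= 0 -> rpow a b = 0.
Proof. intros Ha; unfold rpow; destruct (Rlt_dec 0 a); [lra | easy]. Qed.

Lemma rpow_1_l b : rpow 1 b = 1.
Proof.
  unfold rpow; destruct (Rlt_dec 0 1); [|lra].
  unfold Rpower; rewrite ln_1, Rmult_0_r; apply exp_0.
Qed.

Lemma rpow_plus_1 a b : rpow a (b + 1) = a * rpow a b.
Proof.
  unfold rpow; destruct (Rlt_dec 0 a) as [Ha|]; [|ring].
  rewrite Rpower_plus, Rpower_1 by exact Ha; ring.
Qed.

Lemma rpow_rpow a b c : rpow (rpow a b) c = rpow a (b * c).
Proof.
  unfold rpow at 2 3; destruct (Rlt_dec 0 a) as [Ha|].
  - unfold rpow; destruct (Rlt_dec 0 (Rpower a b)) as [_|Hn].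
    + now rewrite Rpower_mult.
    + exfalso; apply Hn, exp_pos.
  - apply rpow_nonpos; lra.
Qed.

Lemma continuous_rpow_0 b : 0 < b -> continuous (fun a => rpow a b) 0.
Proof.
  intros Hb; apply filterlim_locally; intros eps.
  exists (mkposreal _ (exp_pos (ln eps / b))); intros h Hh.
  change (Rabs (h - 0) < exp (ln eps / b)) in Hh.
  change (Rabs (rpow h b - rpow 0 b) < eps).
  rewrite (rpow_nonpos 0) by lra; rewrite Rminus_0_r, Rabs_pos_eq by apply rpow_ge0.
  unfold rpow; destruct (Rlt_dec 0 h) as [Hpos|]; [|apply cond_pos].
  rewrite Rminus_0_r, Rabs_pos_eq in Hh by lra.
  rewrite <- (exp_ln eps) by apply cond_pos; unfold Rpower.
  apply exp_increasing; apply ln_increasing in Hh; [|lra].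
  rewrite ln_exp in Hh; apply (Rmult_lt_compat_l b) in Hh; [|lra].
  replace (b * (ln eps / b)) with (ln eps) in Hh by (field; lra); lra.
Qed.

Lemma is_derive_rpow r a : 1 < r -> is_derive (fun a => rpow a r) a (r * rpow a (r - 1)).
Proof.
  intros Hr; destruct (Rtotal_order a 0) as [Hneg | [-> | Hpos]].
  - rewrite (rpow_nonpos a) by lra; rewrite Rmult_0_r.
    apply (is_derive_ext_loc (fun _ => 0)); [|apply is_derive_Reals, derivable_pt_lim_const].
    apply (filter_imp (fun z => z < 0)); [|exact (open_lt 0 a Hneg)].
    intros z Hz; symmetry; apply rpow_nonpos; lra.
  - rewrite (rpow_nonpos 0) by lra; rewrite Rmult_0_r.
    apply (is_derive_ext (fun a => a * rpow a (r - 1))).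
    { intros z; rewrite <- rpow_plus_1; f_equal; ring. }
    apply is_derive_mult_vanishing; [apply continuous_rpow_0; lra | apply rpow_nonpos; lra].
  - apply (is_derive_ext_loc (fun a => Rpower a r)).
    + apply (filter_imp (fun z => 0 < z)); [|exact (open_gt 0 a Hpos)].
      intros z Hz; unfold rpow; destruct (Rlt_dec 0 z); [easy | lra].
    + unfold rpow; destruct (Rlt_dec 0 a); [|lra].
      now apply is_derive_Reals, derivable_pt_lim_power.
Qed.

Definition rpow_comp (q : R) (f : R -> R) (s : R) : R := rpow (f s) q.
Definition rpow_comp_d1 (q : R) (f : R -> R) (s : R) : R :=
  q * rpow (f s) (q - 1) * Derive f s.
Definition rpow_comp_d2 (q : R) (f : R -> R) (s : R) : R :=
  q * (q - 1) * rpow (f s) (q - 2) * Derive f s ^ 2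
  + q * rpow (f s) (q - 1) * Derive (Derive f) s.

Lemma is_derive_rpow_comp q f s :
  1 < q -> ex_derive f s -> is_derive (rpow_comp q f) s (rpow_comp_d1 q f s).
Proof.
  intros Hq Hf.
  replace (rpow_comp_d1 q f s) with (scal (Derive f s) (q * rpow (f s) (q - 1)))
    by (unfold rpow_comp_d1, scal; simpl; unfold mult; simpl; ring).
  exact (is_derive_comp _ f s _ _ (is_derive_rpow q (f s) Hq) (Derive_correct f s Hf)).
Qed.

Lemma is_derive_rpow_comp_d1 q f s :
  2 < q -> ex_derive f s -> ex_derive (Derive f) s ->
  is_derive (rpow_comp_d1 q f) s (rpow_comp_d2 q f s).
Proof.
  intros Hq Hf Hf'.
  assert (Hpow : is_derive (fun z => q * rpow (f z) (q - 1)) s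
                   (q * ((q - 1) * rpow (f s) (q - 2) * Derive f s))).
  { replace (q - 2) with (q - 1 - 1) by ring.
    apply (is_derive_scal (fun z => rpow (f z) (q - 1))).
    replace ((q - 1) * rpow (f s) (q - 1 - 1) * Derive f s)
      with (scal (Derive f s) ((q - 1) * rpow (f s) (q - 1 - 1)))
      by (unfold scal; simpl; unfold mult; simpl; ring).
    apply (is_derive_comp (fun a => rpow a (q - 1)) f); [apply is_derive_rpow; lra|].
    now apply Derive_correct. }
  replace (rpow_comp_d2 q f s) with
    (plus (mult (q * ((q - 1) * rpow (f s) (q - 2) * Derive f s)) (Derive f s))
          (mult (q * rpow (f s) (q - 1)) (Derive (Derive f) s)))
    by (unfold rpow_comp_d2, plus, mult; simpl; unfold plus, mult; simpl; ring).
  apply (is_derive_mult (fun z => q * rpow (f z) (q - 1)) (Derive f)); try easy.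
  - now apply Derive_correct.
  - intros; apply Rmult_comm.
Qed.

Lemma rpow_comp_d1_factor q f s :
  rpow_comp_d1 q f s = rpow (f s) (q - 2) * (q * f s * Derive f s).
Proof.
  unfold rpow_comp_d1; replace (q - 1) with (q - 2 + 1) by ring.
  rewrite rpow_plus_1; ring.
Qed.

Lemma rpow_comp_d2_factor q f s :
  rpow_comp_d2 q f s = rpow (f s) (q - 2)
    * (q * (q - 1) * Derive f s ^ 2 + q * f s * Derive (Derive f) s).
Proof.
  unfold rpow_comp_d2; replace (q - 1) with (q - 2 + 1) at 2 by ring.
  rewrite rpow_plus_1; ring.
Qed.

Lemma rpow_comp_cutoff_bounds q eta :
  2 < q -> cutoff eta ->
  exists K, 0 < K /\ forall s, 0 < s <= 1 ->
    Rabs (rpow_comp_d1 q eta s) <= K * rpow (eta_star eta s) (q - 2) /\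
    Rabs (rpow_comp_d2 q eta s) <= K * rpow (eta_star eta s) (q - 2).
Proof.
  intros Hq [HC2 [Hone _]].
  assert (Hflat1 : forall s, 0 < s < 1/2 -> Derive eta s = 0).
  { intros s; apply (Derive_locally_const eta 1 0 (1/2)); intros z Hz; apply Hone; lra. }
  assert (Hflat2 : forall s, 0 < s < 1/2 -> Derive (Derive eta) s = 0).
  { intros s; apply (Derive_locally_const _ 0 0 (1/2)); exact Hflat1. }
  assert (Hcont : forall c, 0 < c -> continuous eta c /\ continuous (Derive eta) c
                                     /\ continuous (Derive (Derive eta)) c).
  { intros c Hc; destruct (HC2 c Hc) as [H1 [H2 H3]].
    split; [|split]; [now apply (ex_derive_continuous (V := R_NormedModule)) .. |].
    now apply continuity_pt_filterlim. }
  set (h1 s := q * eta s * Derive eta s).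
  set (h2 s := q * (q - 1) * Derive eta s ^ 2 + q * eta s * Derive (Derive eta) s).
  destruct (continuous_bounded h1 (1/2) 1) as [M1 HM1]; [lra| |].
  { intros c Hc; destruct (Hcont c ltac:(lra)) as [H0 [H1 _]].
    apply (continuous_mult (fun s => q * eta s)); [|exact H1].
    apply (continuous_mult (fun _ => q)); [apply continuous_const | exact H0]. }
  destruct (continuous_bounded h2 (1/2) 1) as [M2 HM2]; [lra| |].
  { intros c Hc; destruct (Hcont c ltac:(lra)) as [H0 [H1 H2]].
    apply (continuous_plus (fun s => q * (q - 1) * Derive eta s ^ 2)).
    - apply (continuous_mult (fun _ => q * (q - 1))); [apply continuous_const|].
      apply (continuous_mult (Derive eta)); [exact H1|].
      apply (continuous_mult (Derive eta)); [exact H1 | apply continuous_const].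
    - apply (continuous_mult (fun s => q * eta s)); [|exact H2].
      apply (continuous_mult (fun _ => q)); [apply continuous_const | exact H0]. }
  set (K := Rabs M1 + Rabs M2 + 1).
  assert (HK : 0 < K) by (unfold K; pose proof (Rabs_pos M1); pose proof (Rabs_pos M2); lra).
  assert (Hfactor : forall h M s, (0 < s < 1/2 -> h s = 0) ->
            (1/2 <= s <= 1 -> Rabs (h s) <= M) -> M <= K -> 0 < s <= 1 ->
            Rabs (rpow (eta s) (q - 2) * h s) <= K * rpow (eta_star eta s) (q - 2)).
  { intros h M s Hlow Hhigh HMK Hs.
    unfold eta_star; destruct (Rlt_dec s (1/2)).
    - rewrite Hlow, Rmult_0_r, Rabs_R0 by lra; apply Rmult_le_pos; [lra | apply rpow_ge0].
    - pose proof (rpow_ge0 (eta s) (q - 2)).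
      rewrite Rabs_mult, Rabs_pos_eq, Rmult_comm by easy.
      apply Rmult_le_compat_r; [easy|]; specialize (Hhigh ltac:(lra)); lra. }
  exists K; split; [exact HK|].
  intros s Hs; rewrite rpow_comp_d1_factor, rpow_comp_d2_factor; split.
  - apply (Hfactor h1 (Rabs M1)); try easy.
    + intros Hs'; unfold h1; rewrite Hflat1 by easy; ring.
    + intros Hs'; specialize (HM1 s Hs'); pose proof (Rle_abs M1); lra.
    + unfold K; pose proof (Rabs_pos M2); lra.
  - apply (Hfactor h2 (Rabs M2)); try easy.
    + intros Hs'; unfold h2; rewrite Hflat1, Hflat2 by easy; ring.
    + intros Hs'; specialize (HM2 s Hs'); pose proof (Rle_abs M2); lra.
    + unfold K; pose proof (Rabs_pos M1); lra.
Qed.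

Lemma normx_comm x1 x2 : normx x1 x2 = normx x2 x1.
Proof. unfold normx; f_equal; ring. Qed.

Lemma normx_sqr x1 x2 : normx x1 x2 ^ 2 = x1 ^ 2 + x2 ^ 2.
Proof. unfold normx; apply pow2_sqrt; nra. Qed.

Lemma normx_gt_1 x1 x2 : 1 < normx x1 x2 -> 1 < x1 ^ 2 + x2 ^ 2.
Proof. intros H; rewrite <- normx_sqr; nra. Qed.

Lemma sR_comm R0 x1 x2 t : sR R0 x1 x2 t = sR R0 x2 x1 t.
Proof. unfold sR; now rewrite normx_comm. Qed.

Lemma sR_pos R0 x1 x2 t : 0 < R0 -> 1 < normx x1 x2 -> 0 <= t -> 0 < sR R0 x1 x2 t.
Proof. intros HR Hx Ht; unfold sR; apply Rdiv_lt_0_compat; nra. Qed.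

Lemma is_derive_sR_t R0 x1 x2 t : is_derive (sR R0 x1 x2) t (/ R0).
Proof. unfold sR; auto_derive; [easy | ring]. Qed.

Lemma is_derive_sR_x1 R0 x2 t z : 0 < R0 -> 0 < z ^ 2 + x2 ^ 2 ->
  is_derive (fun y => sR R0 y x2 t) z (2 * (z - z / normx z x2) / R0).
Proof.
  intros HR Hz; unfold sR, normx.
  assert (0 < sqrt (z ^ 2 + x2 ^ 2)) by (apply sqrt_lt_R0; lra).
  auto_derive; replace (z * (z * 1) + x2 * (x2 * 1)) with (z ^ 2 + x2 ^ 2) by ring;
    [easy | field; lra].
Qed.

Lemma is_derive_dsR_x1 R0 x2 z : 0 < R0 -> 0 < z ^ 2 + x2 ^ 2 ->
  is_derive (fun y => 2 * (y - y / normx y x2) / R0) z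
    (2 * (1 - 1 / normx z x2 + z ^ 2 / normx z x2 ^ 3) / R0).
Proof.
  intros HR Hz; unfold normx.
  assert (0 < sqrt (z ^ 2 + x2 ^ 2)) by (apply sqrt_lt_R0; lra).
  auto_derive; replace (z * (z * 1) + x2 * (x2 * 1)) with (z ^ 2 + x2 ^ 2) by ring.
  - repeat split; lra.
  - field; lra.
Qed.

Definition radial (G : R -> R) (R0 x1 x2 t : R) : R := G (sR R0 x1 x2 t).

Lemma d_x2_radial_swap G R0 x1 x2 t :
  d_x2 (radial G R0) x1 x2 t = d_x1 (radial G R0) x2 x1 t /\
  d_x2 (d_x2 (radial G R0)) x1 x2 t = d_x1 (d_x1 (radial G R0)) x2 x1 t.
Proof.
  assert (Hswap : forall x1 x2,
             d_x2 (radial G R0) x1 x2 t = d_x1 (radial G R0) x2 x1 t).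
  { intros a b; apply Derive_ext; intros y; unfold radial; now rewrite sR_comm. }
  split; [apply Hswap | apply Derive_ext; intros y; apply Hswap].
Qed.

Section RadialDerivatives.

Variables (G G1 G2 : R -> R) (R0 : R).
Hypothesis HG : forall s, 0 < s -> is_derive G s (G1 s).
Hypothesis HG1 : forall s, 0 < s -> is_derive G1 s (G2 s).
Hypothesis HR0 : 0 < R0.

Lemma radial_t_derivatives x1 x2 t : inOmega x1 x2 -> 0 <= t ->
  d_t (radial G R0) x1 x2 t = G1 (sR R0 x1 x2 t) / R0 /\
  d_tt (radial G R0) x1 x2 t = G2 (sR R0 x1 x2 t) / R0 ^ 2.
Proof.
  intros Hx Ht.
  destruct (Derive2_comp G G1 G2 (sR R0 x1 x2) (fun _ => / R0) (fun _ => 0) t)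
    as [D1 D2].
  - apply (filter_imp (fun z => 0 < sR R0 x1 x2 z)).
    + intros z Hz; split; [now apply HG | apply is_derive_sR_t].
    + apply locally_gt_of_continuous; [|now apply sR_pos].
      apply (ex_derive_continuous (V := R_NormedModule)).
      eexists; apply is_derive_sR_t.
  - now apply HG1, sR_pos.
  - apply is_derive_Reals, derivable_pt_lim_const.
  - unfold d_tt, d_t, radial; rewrite D1, D2; split; field; lra.
Qed.

Lemma radial_x1_derivatives x1 x2 t : inOmega x1 x2 -> 0 <= t ->
  let s := sR R0 x1 x2 t in let r := normx x1 x2 in
  d_x1 (radial G R0) x1 x2 t = G1 s * (2 * (x1 - x1 / r) / R0) /\
  d_x1 (d_x1 (radial G R0)) x1 x2 t
    = G2 s * (2 * (x1 - x1 / r) / R0) ^ 2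
      + G1 s * (2 * (1 - 1 / r + x1 ^ 2 / r ^ 3) / R0).
Proof.
  intros Hx Ht s r.
  destruct (Derive2_comp G G1 G2 (fun y => sR R0 y x2 t)
              (fun y => 2 * (y - y / normx y x2) / R0)
              (fun y => 2 * (1 - 1 / normx y x2 + y ^ 2 / normx y x2 ^ 3) / R0) x1)
    as [D1 D2].
  - apply (filter_imp (fun z => 1 < normx z x2)).
    + intros z Hz; split; [now apply HG, sR_pos|].
      apply is_derive_sR_x1; [easy | pose proof (normx_gt_1 _ _ Hz); lra].
    + apply locally_gt_of_continuous; [|exact Hx].
      apply (ex_derive_continuous (V := R_NormedModule)).
      pose proof (normx_gt_1 _ _ Hx); unfold normx; auto_derive; nra.
  - now apply HG1, sR_pos.
  - apply is_derive_dsR_x1; [easy | pose proof (normx_gt_1 _ _ Hx); lra].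
  - unfold d_x1, radial; now rewrite D1, D2.
Qed.

Lemma grad_norm_radial x1 x2 t : inOmega x1 x2 -> 0 <= t ->
  grad_norm (radial G R0) x1 x2 t
    = Rabs (G1 (sR R0 x1 x2 t)) * (2 * (normx x1 x2 - 1) / R0).
Proof.
  intros Hx Ht.
  assert (Hx' : inOmega x2 x1) by (unfold inOmega; now rewrite normx_comm).
  unfold grad_norm; rewrite (proj1 (d_x2_radial_swap G R0 x1 x2 t)).
  rewrite (proj1 (radial_x1_derivatives x1 x2 t Hx Ht)).
  rewrite (proj1 (radial_x1_derivatives x2 x1 t Hx' Ht)).
  rewrite (sR_comm R0 x2 x1), (normx_comm x2 x1).
  pose proof (normx_sqr x1 x2) as Hsq; unfold inOmega in Hx; set (r := normx x1 x2) in *.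
  rewrite <- sqrt_pow2 by (apply Rmult_le_pos; [apply Rabs_pos | apply Rdiv_le_0_compat; lra]).
  f_equal; set (g := G1 (sR R0 x1 x2 t)).
  replace ((Rabs g * (2 * (r - 1) / R0)) ^ 2) with (g ^ 2 * (2 * (r - 1) / R0) ^ 2)
    by (rewrite Rpow_mult_distr, pow2_abs; ring).
  transitivity (g ^ 2 * (2 / R0) ^ 2 * ((x1 ^ 2 + x2 ^ 2) * (1 - 1 / r) ^ 2)); [field; lra|].
  rewrite <- Hsq; field; lra.
Qed.

Lemma laplacian_radial x1 x2 t : inOmega x1 x2 -> 0 <= t ->
  laplacian (radial G R0) x1 x2 t
    = G2 (sR R0 x1 x2 t) * (4 * (normx x1 x2 - 1) ^ 2 / R0 ^ 2)
      + G1 (sR R0 x1 x2 t) * (2 * (2 - 1 / normx x1 x2) / R0).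
Proof.
  intros Hx Ht.
  assert (Hx' : inOmega x2 x1) by (unfold inOmega; now rewrite normx_comm).
  unfold laplacian; rewrite (proj2 (d_x2_radial_swap G R0 x1 x2 t)).
  rewrite (proj2 (radial_x1_derivatives x1 x2 t Hx Ht)).
  rewrite (proj2 (radial_x1_derivatives x2 x1 t Hx' Ht)).
  rewrite (sR_comm R0 x2 x1), (normx_comm x2 x1).
  pose proof (normx_sqr x1 x2) as Hsq; unfold inOmega in Hx; set (r := normx x1 x2) in *.
  set (g1 := G1 (sR R0 x1 x2 t)); set (g2 := G2 (sR R0 x1 x2 t)).
  transitivity (g2 * (2 / R0) ^ 2 * ((x1 ^ 2 + x2 ^ 2) * (1 - 1 / r) ^ 2)
                + g1 * (2 * (2 - 2 / r + (x1 ^ 2 + x2 ^ 2) / r ^ 3) / R0)); [field; lra|].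
  rewrite <- Hsq; field; lra.
Qed.

End RadialDerivatives.

Lemma sR_in_unit R0 x1 x2 t : 0 < R0 -> inP R0 x1 x2 t -> 0 < sR R0 x1 x2 t <= 1.
Proof.
  intros HR [Hx [Ht Hle]]; split; [now apply sR_pos|].
  unfold sR; apply (Rdiv_le_1 _ _ HR); lra.
Qed.

Section RadialEstimates.

Variables (G G1 G2 : R -> R) (R0 K b : R).
Hypothesis HG : forall s, 0 < s -> is_derive G s (G1 s).
Hypothesis HG1 : forall s, 0 < s -> is_derive G1 s (G2 s).
Hypothesis HR0 : 0 < R0.

Lemma radial_estimates x1 x2 t : inP R0 x1 x2 t ->
  Rabs (G1 (sR R0 x1 x2 t)) <= K * b -> Rabs (G2 (sR R0 x1 x2 t)) <= K * b ->
  Rabs (d_t (radial G R0) x1 x2 t) <= K / R0 * b /\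
  Rabs (d_tt (radial G R0) x1 x2 t) <= K / R0 ^ 2 * b /\
  grad_norm (radial G R0) x1 x2 t <= 2 * K / R0 * normx x1 x2 * ln (normx x1 x2) * b /\
  Rabs (laplacian (radial G R0) x1 x2 t) <= 8 * K / R0 * b.
Proof.
  intros HP B1 B2; pose proof HP as [Hx [Ht HPle]].
  destruct (radial_t_derivatives G G1 G2 R0 HG HG1 HR0 x1 x2 t Hx Ht) as [Dt Dtt].
  rewrite Dt, Dtt, (grad_norm_radial G G1 G2 R0 HG HG1 HR0),
    (laplacian_radial G G1 G2 R0 HG HG1 HR0) by easy.
  unfold inOmega in Hx; set (r := normx x1 x2) in *.
  assert (HiR : 0 < / R0) by (apply Rinv_0_lt_compat; lra).
  split; [|split; [|split]].
  - replace (K / R0 * b) with (K * b * / R0) by (field; lra).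
    apply Rabs_mult_le; lra.
  - replace (K / R0 ^ 2 * b) with (K * b * / R0 ^ 2) by (field; lra).
    apply Rabs_mult_le; [easy|]; split; [left; apply Rinv_0_lt_compat, pow_lt|]; lra.
  - pose proof (sub_1_le_mul_ln r ltac:(lra)).
    replace (2 * K / R0 * r * ln r * b) with (K * b * (2 * (r * ln r) / R0)) by (field; lra).
    apply Rmult_le_compat; [apply Rabs_pos | apply Rdiv_le_0_compat; lra | easy |].
    apply Rmult_le_compat_r; lra.
  - assert (Hsq : 4 * (r - 1) ^ 2 / R0 ^ 2 <= 4 / R0).
    { replace (4 / R0) with (4 * R0 / R0 ^ 2) by (field; lra).
      apply Rmult_le_compat_r; [left; apply Rinv_0_lt_compat, pow_lt|]; lra. }
    assert (Hinv : 0 < 1 / r < 1).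
    { split; [apply Rdiv_lt_0_compat; lra | apply (Rdiv_lt_1 1 r); lra]. }
    eapply Rle_trans; [apply Rabs_triang|].
    replace (8 * K / R0 * b) with (K * b * (4 / R0) + K * b * (4 / R0)) by (field; lra).
    apply Rplus_le_compat; apply Rabs_mult_le; try easy; split.
    + apply Rdiv_le_0_compat; [nra | apply pow_lt; lra].
    + easy.
    + apply Rdiv_le_0_compat; lra.
    + unfold Rdiv; apply Rmult_le_compat_r; lra.
Qed.

End RadialEstimates.

Lemma psi_eq_1 p eta R0 x1 x2 t :
  cutoff eta -> 0 < R0 -> inP (R0 / 2) x1 x2 t -> psi p eta R0 x1 x2 t = 1.
Proof.
  intros [_ [Hone _]] HR [_ [Ht Hle]]; unfold psi; rewrite Hone; [apply rpow_1_l|].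
  pose proof (pow2_ge_0 (normx x1 x2 - 1)).
  unfold sR; split; [apply Rdiv_le_0_compat; lra|].
  apply (Rmult_le_reg_r R0); [easy|]; unfold Rdiv; rewrite Rmult_assoc, Rinv_l; lra.
Qed.

Lemma psi_eq_0 p eta R0 x1 x2 t :
  cutoff eta -> 0 < R0 -> inOmega x1 x2 -> 0 <= t -> ~ inP R0 x1 x2 t ->
  psi p eta R0 x1 x2 t = 0.
Proof.
  intros [_ [_ [_ Hzero]]] HR Hx Ht HnP; unfold psi; rewrite Hzero; [apply rpow_nonpos; lra|].
  destruct (Rle_lt_dec ((normx x1 x2 - 1) ^ 2 + t) R0) as [Hle | Hgt]; [now exfalso; apply HnP|].
  unfold sR; apply (Rmult_le_reg_r R0); [easy|]; unfold Rdiv; rewrite Rmult_assoc, Rinv_l; lra.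
Qed.

Lemma rpow_psi_star_inv_p p eta R0 x1 x2 t : 1 < p ->
  rpow (psi_star p eta R0 x1 x2 t) (1 / p)
    = rpow (eta_star eta (sR R0 x1 x2 t)) (2 * pconj p - 2).
Proof. intros Hp; unfold psi_star; rewrite rpow_rpow; f_equal; unfold pconj; field; lra. Qed.

Theorem lemma2p2 (p : R) (eta : R -> R) :
  1 < p -> cutoff eta ->
  exists C1 C2 C3 C4 : R, 0 < C1 /\ 0 < C2 /\ 0 < C3 /\ 0 < C4 /\
  forall R0 : R, 0 < R0 ->
    (* (i) *)
    (forall x1 x2 t, inOmega x1 x2 -> 0 <= t ->
       (inP (R0 / 2) x1 x2 t -> psi p eta R0 x1 x2 t = 1) /\
       (~ inP R0 x1 x2 t -> psi p eta R0 x1 x2 t = 0)) /\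
    (forall x1 x2 t, inP R0 x1 x2 t ->
       (* (ii) *)
       Rabs (d_t (psi p eta R0) x1 x2 t)
         <= C1 / R0 * rpow (psi_star p eta R0 x1 x2 t) (1 / p) /\
       (* (iii) *)
       Rabs (d_tt (psi p eta R0) x1 x2 t)
         <= C2 / R0 ^ 2 * rpow (psi_star p eta R0 x1 x2 t) (1 / p) /\
       (* (iv) *)
       grad_norm (psi p eta R0) x1 x2 t
         <= C3 / R0 * normx x1 x2 * ln (normx x1 x2)
              * rpow (psi_star p eta R0 x1 x2 t) (1 / p) /\
       (* (v) *)
       Rabs (laplacian (psi p eta R0) x1 x2 t)
         <= C4 / R0 * rpow (psi_star p eta R0 x1 x2 t) (1 / p)).
Proof.
  intros Hp Hcut; pose proof Hcut as [HC2 _].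
  set (q := 2 * pconj p).
  assert (Hq : 2 < q).
  { unfold q, pconj; replace (2 * (p / (p - 1))) with (2 + 2 / (p - 1)) by (field; lra).
    assert (0 < 2 / (p - 1)) by (apply Rdiv_lt_0_compat; lra); lra. }
  destruct (rpow_comp_cutoff_bounds q eta Hq Hcut) as [K [HK HB]].
  exists K, K, (2 * K), (8 * K); do 4 (split; [lra|]).
  intros R0 HR0; split.
  - intros x1 x2 t Hx Ht; split; [now apply psi_eq_1 | now apply psi_eq_0].
  - intros x1 x2 t HP; rewrite rpow_psi_star_inv_p by easy.
    change (psi p eta R0) with (radial (rpow_comp q eta) R0).
    destruct (HB _ (sR_in_unit R0 x1 x2 t HR0 HP)) as [B1 B2].
    apply (radial_estimates _ (rpow_comp_d1 q eta) (rpow_comp_d2 q eta)); try easy.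
    + intros s Hs; apply is_derive_rpow_comp; [lra | apply (HC2 s Hs)].
    + intros s Hs; apply is_derive_rpow_comp_d1; [easy | apply (HC2 s Hs) ..].
Qed.
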